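(* Let $(K,v)$ be an extremal valued field with nontrivial valuation, divisible value group $\Gamma$, valuation ring $\mathcal{O}_v$, maximal ideal $\mathfrak{m}_v$, and residue field $k$ which is not algebraically closed. Then there is no polynomial $f(Y,Z)\in\mathcal{O}_v[Y,Z]$ such that both (i) there are $\alpha_1,\dots,\alpha_m\in k$ such that for every $\alpha\in k\setminus\{\alpha_1,\dots,\alpha_m\}$ the equation $\bar f(\alpha,z)=0$ has no solution $z\in k$ (where $\bar f\in k[Y,Z]$ is the reduction of $f$ modulo $\mathfrak{m}_v$), and (ii) for every $\epsilon\in\mathfrak{m}_v$ the equation $f(\epsilon,Z)=0$ has a solution in $\mathcal{O}_v$.
   Context: $(K,v)$ with valuation ring $\mathcal{O}_v$ and value group $\Gamma$ (and $v(0)=\infty$) is extremal if for every $n\ge1$ and every $F\in K[X_1,\dots,X_n]$ the set $\{v(F(a_1,\dots,a_n)) : a_i\in\mathcal{O}_v\}\subseteq\Gamma\cup\{\infty\}$ has a maximal element. *)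

From HB Require Import structures.
From mathcomp Require Import all_boot all_order all_algebra.
Set Implicit Arguments. Unset Strict Implicit. Unset Printing Implicit Defensive.
Import Order.TTheory GRing.Theory Num.Theory.
Local Open Scope ring_scope.

Definition ordered_abelian_group (G : zmodType) (le : rel G) : Prop :=
  [/\ (forall x, le x x),
      (forall x y, le x y -> le y x -> x = y),
      (forall x y z, le x y -> le y z -> le x z),
      (forall x y, le x y || le y x) &
      (forall x y z, le x y -> le (x + z) (y + z))].

(* Values in G ∪ {∞}, with None = ∞. *)
Definition vle (G : zmodType) (le : rel G) (a b : option G) : bool :=
  match a, b with
  | _, None => true
  | None, Some _ => false
  | Some x, Some y => le x y
  end.

Definition vlt (G : zmodType) (le : rel G) (a b : option G) : bool :=
  vle le a b && (a != b).

Definition vadd (G : zmodType) (a b : option G) : option G :=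
  match a, b with
  | Some x, Some y => Some (x + y)
  | _, _ => None
  end.

Definition vmin (G : zmodType) (le : rel G) (a b : option G) : option G :=
  if vle le a b then a else b.

Definition is_valuation (K : fieldType) (G : zmodType) (le : rel G)
  (v : K -> option G) : Prop :=
  [/\ ordered_abelian_group le,
      (forall x, v x = None <-> x = 0),
      (forall x y, v (x * y) = vadd (v x) (v y)),
      (forall x y, vle le (vmin le (v x) (v y)) (v (x + y))) &
      (forall g, exists x, v x = Some g)].

Definition in_O (K : fieldType) (G : zmodType) (le : rel G)
  (v : K -> option G) (x : K) : Prop := vle le (Some 0) (v x).
Definition in_m (K : fieldType) (G : zmodType) (le : rel G)
  (v : K -> option G) (x : K) : Prop := vlt le (Some 0) (v x).

Definition is_residue_map (K : fieldType) (G : zmodType) (le : rel G)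
  (v : K -> option G) (k : fieldType) (res : K -> k) : Prop :=
  [/\ (forall x y, in_O le v x -> in_O le v y -> res (x + y) = res x + res y),
      (forall x y, in_O le v x -> in_O le v y -> res (x * y) = res x * res y),
      res 1 = 1,
      (forall x, in_O le v x -> (res x = 0 <-> in_m le v x)) &
      (forall c, exists2 x, in_O le v x & res x = c)].

(* Multivariate polynomials over K are represented by inversion-free
   formal ring terms (GRing.term) in the variables 'X_0, 'X_1, ... *)
Fixpoint inv_free (R : pzRingType) (t : GRing.term R) : bool :=
  match t with
  | GRing.Var _ | GRing.Const _ | GRing.NatConst _ => true
  | GRing.Add s u | GRing.Mul s u => inv_free s && inv_free u
  | GRing.Opp s | GRing.NatMul s _ | GRing.Exp s _ => inv_free s
  | GRing.Inv _ => false
  end.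

Definition extremal (K : fieldType) (G : zmodType) (le : rel G)
  (v : K -> option G) : Prop :=
  forall (n : nat) (F : GRing.term K), inv_free F ->
    exists a : seq K, [/\ size a = n, (forall x, x \in a -> in_O le v x) &
      forall b : seq K, size b = n -> (forall x, x \in b -> in_O le v x) ->
        vle le (v (GRing.eval b F)) (v (GRing.eval a F))].

From Pilot Require Import Defs.
From HB Require Import structures.
From mathcomp Require Import all_boot all_order all_algebra.
From mathcomp Require Import ring.
From Stdlib Require Import Classical.
Set Implicit Arguments. Unset Strict Implicit. Unset Printing Implicit Defensive.
Import Order.TTheory GRing.Theory Num.Theory.
Local Open Scope ring_scope.

(* Since k is not algebraically closed, some monic polynomial of degree n >= 1
   over k has no root.  Lifting its coefficients p_i to O gives a binary form
   Phi(a, b) = a^n - sum_i p_i a^i b^(n-i) which is a unit whenever a or b is,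
   and nesting Phi gives forms Psi in any number of variables with the same
   property.  Choose c_1, ..., c_r in O such that for every unit u some
   f(c_j / u, Z) takes only unit values on O: by (i) if k is infinite; if k is
   finite, f is replaced by Z^2 - Z - Y, which satisfies (ii) by extremality
   (a Newton step improves any approximate root) and for which (i) holds in the
   required form because z |-> z^2 - z is not onto k.  Let
     Q(X, Z_1, ..., Z_r) = Psi(X^M, F_1, ..., F_r),
     F_j = Phi(X, pi)^N f(c_j pi^n / Phi(X, pi), Z_j),
   with pi in m nonzero, N a bound on the Y-degree of f, M = nN + 1 and
   D = n^(r+1).  Comparing x with pi shows v(Q) < v(pi^(MD)) on O^(r+1).
   Extremality gives a maximal value v(q) of v(Q), and divisibility of the
   value group gives x with v(q) < v(x^(MD)) < v(pi^(MD)).  Then every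
   c_j pi^n / Phi(x, pi) lies in m, so by (ii) each F_j(x, .) has a zero z_j,
   and Q(x, z) = x^(MD) has value larger than the maximum. *)

Section OrderedAbelianGroup.
Variables (G : zmodType) (le : rel G).
Hypothesis Hle : ordered_abelian_group le.

Lemma oag_refl x : le x x.
Proof. by case: Hle. Qed.

Lemma oag_anti x y : le x y -> le y x -> x = y.
Proof. by case: Hle => _ anti _ _ _; apply: anti. Qed.

Lemma oag_trans x y z : le x y -> le y z -> le x z.
Proof. by case: Hle => _ _ trans _ _; apply: trans. Qed.

Lemma oag_total x y : le x y || le y x.
Proof. by case: Hle. Qed.

Lemma oag_addr x y z : le x y -> le (x + z) (y + z).
Proof. by case: Hle => _ _ _ _ addr; apply: addr. Qed.

Lemma oag_addl x y z : le x y -> le (z + x) (z + y).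
Proof. by rewrite ![z + _]addrC; apply: oag_addr. Qed.

Lemma oag_add a b c d : le a b -> le c d -> le (a + c) (b + d).
Proof. by move=> /(oag_addr c) ab /(oag_addl b); apply: oag_trans. Qed.

Lemma oag_opp a b : le a b -> le (- b) (- a).
Proof.
by move/(oag_addr (- a - b)); rewrite addrA subrr add0r addrCA subrr addr0.
Qed.

Lemma oag_double_eq0 (x : G) : x + x = 0 -> x = 0.
Proof.
move=> xx0; have [x_ge0|x_le0] := orP (oag_total 0 x).
  by have := oag_addr x x_ge0; rewrite add0r xx0 => x_le0; apply: oag_anti.
by have := oag_addr x x_le0; rewrite add0r xx0 => x_ge0; apply: oag_anti.
Qed.

Lemma vle_trans a b c : vle le a b -> vle le b c -> vle le a c.
Proof. by case: a b c => [a|] [b|] [c|] //=; apply: oag_trans. Qed.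

End OrderedAbelianGroup.

Definition eval2 (R : nzRingType) (f : {poly {poly R}}) (y z : R) : R :=
  (map_poly (fun q : {poly R} => q.[y]) f).[z].

Section Forms.
Variables (R : pzRingType) (n : nat) (p : nat -> R).

Definition binform (a b : R) : R := a ^+ n - \sum_(i < n) p i * a ^+ i * b ^+ (n - i).

Fixpoint iterform (s : seq R) : R :=
  if s is a :: l then binform (a ^+ (n ^ size l)) (iterform l) else 0.

Lemma binform_a0 a : binform a 0 = a ^+ n.
Proof.
rewrite /binform big1 ?subr0 // => i _.
by rewrite expr0n subn_eq0 leqNgt ltn_ord mulr0.
Qed.

Lemma iterform_nseq0 r : (0 < n)%N -> iterform (nseq r 0) = 0.
Proof.
move=> n_gt0; elim: r => //= r ->.
by rewrite binform_a0 expr0n expn_eq0 eqn0Ngt n_gt0 /= expr0n eqn0Ngt n_gt0.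
Qed.

Lemma iterform_cons_nseq0 x r : (0 < n)%N -> iterform (x :: nseq r 0) = x ^+ (n ^ r.+1).
Proof. by move=> n_gt0; rewrite /= iterform_nseq0 // binform_a0 size_nseq -exprM expnSr. Qed.

End Forms.

Lemma binform_scale (R : comPzRingType) n (p : nat -> R) l a b :
  binform n p (l * a) (l * b) = l ^+ n * binform n p a b.
Proof.
rewrite /binform mulrBr exprMn mulr_sumr; congr (_ - _); apply: eq_bigr => i _.
have -> : l ^+ n = l ^+ i * l ^+ (n - i) by rewrite -exprD subnKC // ltnW.
by rewrite !exprMn; ring.
Qed.

Lemma iterform_scale (R : comPzRingType) n (p : nat -> R) l s :
  iterform n p (map ( *%R l) s) = l ^+ (n ^ size s) * iterform n p s.
Proof.
elim: s => [|a s IHs] /=; first by rewrite mulr0.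
by rewrite IHs size_map exprMn binform_scale -exprM expnSr.
Qed.

Definition no_root (R : pzRingType) n (p : nat -> R) :=
  forall x, x ^+ n != \sum_(i < n) p i * x ^+ i.

Lemma no_root_binform_eq0 (F : fieldType) n (p : nat -> F) a b :
  no_root n p -> binform n p a b = 0 -> a = 0 /\ b = 0.
Proof.
move=> p_noroot; have [->|b0] := eqVneq b 0.
  by rewrite binform_a0 => /eqP; rewrite expf_eq0 => /andP[_ /eqP].
have -> : binform n p a b = b ^+ n * binform n p (a / b) 1.
  by rewrite -binform_scale mulr1 mulrC divfK.
move/eqP; rewrite mulf_eq0 expf_eq0 (negbTE b0) andbF /= subr_eq0.
under eq_bigr do rewrite expr1n mulr1.
by rewrite (negbTE (p_noroot _)).
Qed.

Definition homog_eval2 (R : nzRingType) (g : {poly {poly R}}) (N : nat) (y d z : R) : R :=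
  \sum_(i < size g) \sum_(j < N) (g`_i)`_j * y ^+ j * d ^+ (N - j) * z ^+ i.

Lemma homog_eval2E (F : fieldType) (g : {poly {poly F}}) N (y d z : F) :
  d != 0 -> (forall i, (size (g`_i)%R <= N)%N) ->
  homog_eval2 g N y d z = d ^+ N * eval2 g (y / d) z.
Proof.
move=> d0 gN; have gsize : (size (map_poly (fun q : {poly F} => q.[y / d]) g) <= size g)%N.
  exact: size_poly.
rewrite /eval2 (horner_coef_wide _ gsize) mulr_sumr.
apply: eq_bigr => i _; rewrite coef_map_id0 ?horner0 // (horner_coef_wide _ (gN i)).
rewrite mulr_suml mulr_sumr; apply: eq_bigr => j _.
have -> : d ^+ N = d ^+ j * d ^+ (N - j) by rewrite -exprD subnKC // ltnW.
by rewrite expr_div_n; field; rewrite expf_neq0.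
Qed.

Section Terms.
Variable R : unitRingType.

Definition term_sum n (T : nat -> GRing.term R) : GRing.term R :=
  \big[GRing.Add/GRing.Const 0]_(i < n) T i.

Lemma eval_term_sum e n (T : nat -> GRing.term R) :
  GRing.eval e (term_sum n T) = \sum_(i < n) GRing.eval e (T i).
Proof. by rewrite /term_sum (big_morph (GRing.eval e) (id1 := 0) (op1 := +%R)). Qed.

Lemma inv_free_term_sum n (T : nat -> GRing.term R) :
  (forall i, inv_free (T i)) -> inv_free (term_sum n T).
Proof. by move=> freeT; apply: (big_rec (@inv_free R)) => //= i t _ ->; rewrite freeT. Qed.

Definition binform_term n (p : nat -> R) (A B : GRing.term R) : GRing.term R :=
  GRing.Add (GRing.Exp A n) (GRing.Opp (term_sum n (fun i =>
    GRing.Mul (GRing.Mul (GRing.Const (p i)) (GRing.Exp A i)) (GRing.Exp B (n - i))))).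

Lemma eval_binform_term e n p A B :
  GRing.eval e (binform_term n p A B) = binform n p (GRing.eval e A) (GRing.eval e B).
Proof. by rewrite /= eval_term_sum. Qed.

Lemma inv_free_binform_term n p A B :
  inv_free A -> inv_free B -> inv_free (binform_term n p A B).
Proof. by move=> /= freeA freeB; rewrite freeA inv_free_term_sum //= => i; rewrite freeA freeB. Qed.

Fixpoint iterform_term n (p : nat -> R) (s : seq (GRing.term R)) : GRing.term R :=
  if s is A :: l then binform_term n p (GRing.Exp A (n ^ size l)) (iterform_term n p l)
  else GRing.Const 0.

Lemma eval_iterform_term e n p s :
  GRing.eval e (iterform_term n p s) = iterform n p (map (GRing.eval e) s).
Proof.
elim: s => // A s IHs.
by rewrite (eval_binform_term e n p (GRing.Exp A _)) IHs /= size_map.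
Qed.

Lemma inv_free_iterform_term n p s :
  all (@inv_free R) s -> inv_free (iterform_term n p s).
Proof.
elim: s => //= A s IHs /andP[freeA frees].
by apply: inv_free_binform_term => //=; apply: IHs.
Qed.

Definition homog_eval2_term (g : {poly {poly R}}) N (Y D Z : GRing.term R) : GRing.term R :=
  term_sum (size g) (fun i => term_sum N (fun j =>
    GRing.Mul (GRing.Mul (GRing.Mul (GRing.Const (g`_i)`_j) (GRing.Exp Y j))
      (GRing.Exp D (N - j))) (GRing.Exp Z i))).

Lemma eval_homog_eval2_term e g N Y D Z :
  GRing.eval e (homog_eval2_term g N Y D Z) =
  homog_eval2 g N (GRing.eval e Y) (GRing.eval e D) (GRing.eval e Z).
Proof.
by rewrite eval_term_sum; apply: eq_bigr => i _; rewrite eval_term_sum.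
Qed.

Lemma inv_free_homog_eval2_term g N Y D Z :
  inv_free Y -> inv_free D -> inv_free Z -> inv_free (homog_eval2_term g N Y D Z).
Proof.
move=> freeY freeD freeZ; do 2!apply: inv_free_term_sum => ? /=.
by rewrite freeY freeD freeZ.
Qed.

End Terms.

Lemma seq_choice (T : Type) (x0 : T) (P : nat -> T -> Prop) r :
  (forall j, (j < r)%N -> exists x, P j x) ->
  exists2 s : seq T, size s = r & forall j, (j < r)%N -> P j (nth x0 s j).
Proof.
elim: r => [|r IHr] Pr; first by exists [::].
have [j lt_j_r|s s_size Ps] := IHr; first by apply: Pr; rewrite ltnS ltnW.
have [x Px] := Pr r (ltnSn r); exists (rcons s x); first by rewrite size_rcons s_size.
move=> j; rewrite ltnS leq_eqVlt nth_rcons s_size => /predU1P[->|lt_j_r].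
  by rewrite ltnn eqxx.
by rewrite lt_j_r; apply: Ps.
Qed.

(* Z^2 - Z - Y, with Z the outer and Y the inner variable. *)
Definition artin_schreier (R : nzRingType) : {poly {poly R}} := 'X^2 - 'X - ('X)%:P.

Lemma eval2_artin_schreier (R : comNzRingType) (y z : R) :
  eval2 (artin_schreier R) y z = z ^+ 2 - z - y.
Proof.
rewrite /eval2 /artin_schreier (_ : (fun q : {poly R} => q.[y]) = horner_eval y) //.
by rewrite !rmorphB /= map_polyXn map_polyX map_polyC /= !hornerE horner_evalE hornerX.
Qed.

Lemma artin_schreier_not_surj (F : fieldType) (s : seq F) : (forall x, x \in s) ->
  exists c : F, forall z, z ^+ 2 - z != c.
Proof.
move=> s_full; apply: NNPP => surj.
have {}surj c : exists z : F, z ^+ 2 - z = c.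
  by apply: NNPP => /(not_ex_all_not _ _) /= noz; apply: surj; exists c => z; apply/eqP/noz.
set phi := fun z : F => z ^+ 2 - z; set u := undup s.
have u_full x : x \in u by rewrite mem_undup.
have uniq_phi_u : uniq (map phi u).
  apply: (leq_size_uniq (undup_uniq s)); last by rewrite size_map.
  by move=> x _; have [z <-] := surj x; apply: map_f.
have phi01 : phi 0 = phi 1 by rewrite /phi expr0n expr1n !subrr.
have := uniq_phi_u; rewrite (perm_uniq (perm_map phi (perm_to_rem (u_full 0)))) /=.
case/andP => /negP phi0_notin _; apply: phi0_notin; rewrite phi01 map_f //.
by rewrite mem_rem_uniq ?undup_uniq // !inE oner_neq0 u_full.
Qed.

Lemma uniq_seq_or_finite (T : eqType) m :
  (exists2 s : seq T, uniq s & size s = m) \/ exists s : seq T, forall x, x \in s.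
Proof.
elim: m => [|m [[s s_uniq s_size]|]]; [by left; exists [::] | | by right].
have [[x xs]|s_full] := classic (exists x, x \notin s).
  by left; exists (x :: s); rewrite /= ?xs ?s_uniq ?s_size.
by right; exists s => x; apply: NNPP => /negP xs; apply: s_full; exists x.
Qed.

Section ValuedField.
Variables (K : fieldType) (G : zmodType) (le : rel G) (v : K -> option G).
Hypothesis Hv : is_valuation le v.

Let Hle : ordered_abelian_group le. Proof. by case: Hv. Qed.

Local Notation in_O := (in_O le v).
Local Notation in_m := (in_m le v).

Definition vunit (x : K) := v x = Some 0.

Lemma v_eq_None x : v x = None <-> x = 0.
Proof. by case: Hv => _ h _ _ _. Qed.

Lemma v0 : v 0 = None.
Proof. exact/v_eq_None. Qed.

Lemma vM x y : v (x * y) = vadd (v x) (v y).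
Proof. by case: Hv => _ _ h _ _. Qed.

Lemma vD x y : vle le (vmin le (v x) (v y)) (v (x + y)).
Proof. by case: Hv => _ _ _ h _. Qed.

Lemma v_surj g : exists x, v x = Some g.
Proof. by case: Hv => _ _ _ _ h. Qed.

Lemma v_Some x : x != 0 -> exists g, v x = Some g.
Proof.
case e: (v x) => [g|]; first by exists g.
by move/v_eq_None: e => ->; rewrite eqxx.
Qed.

Lemma v1 : v 1 = Some 0.
Proof.
have [g g1] := v_Some (oner_neq0 K); have := vM 1 1.
by rewrite mulr1 g1 => -[/esym/eqP]; rewrite -subr_eq0 addrK => /eqP ->.
Qed.

Lemma vN1 : v (-1) = Some 0.
Proof.
have [g gN1] : exists g, v (-1) = Some g by apply: v_Some; rewrite oppr_eq0 oner_eq0.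
have := vM (-1) (-1).
by rewrite mulrNN mulr1 v1 gN1 => -[/esym/(oag_double_eq0 Hle) ->].
Qed.

Lemma vV x g : v x = Some g -> v x^-1 = Some (- g).
Proof.
move=> vx; have x0 : x != 0 by apply: contra_eq_neq vx => ->; rewrite v0.
have [h vxV] := v_Some (invr_neq0 x0); have := vM x x^-1.
by rewrite mulfV // v1 vx vxV /= => -[/eqP]; rewrite eq_sym addrC addr_eq0 => /eqP ->.
Qed.

Lemma vX x g n : v x = Some g -> v (x ^+ n) = Some (g *+ n).
Proof.
move=> vx; elim: n => [|n IHn]; first by rewrite expr0 v1 mulr0n.
by rewrite exprS vM IHn vx /= mulrS.
Qed.

Lemma in_O0 : in_O 0.
Proof. by rewrite /Defs.in_O v0. Qed.

Lemma in_O1 : in_O 1.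
Proof. by rewrite /Defs.in_O v1 /= oag_refl. Qed.

Lemma in_OM x y : in_O x -> in_O y -> in_O (x * y).
Proof.
rewrite /Defs.in_O vM; case: (v x) (v y) => [a|] [b|] //= a_ge0 b_ge0.
by rewrite -[0]addr0 oag_add.
Qed.

Lemma in_OD x y : in_O x -> in_O y -> in_O (x + y).
Proof.
rewrite /Defs.in_O => Ox Oy; apply: (vle_trans Hle _ (vD x y)).
by rewrite /vmin; case: ifP.
Qed.

Lemma in_ON x : in_O x -> in_O (- x).
Proof. by rewrite -mulN1r; apply: in_OM; rewrite /Defs.in_O vN1 /= oag_refl. Qed.

Lemma in_OB x y : in_O x -> in_O y -> in_O (x - y).
Proof. by move=> Ox /in_ON; apply: in_OD. Qed.

Lemma in_OX x n : in_O x -> in_O (x ^+ n).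
Proof.
move=> Ox; elim: n => [|n IHn]; first by rewrite expr0; apply: in_O1.
by rewrite exprS; apply: in_OM.
Qed.

Lemma in_OMn x n : in_O x -> in_O (x *+ n).
Proof.
move=> Ox; elim: n => [|n IHn]; first by rewrite mulr0n; apply: in_O0.
by rewrite mulrS; apply: in_OD.
Qed.

Lemma in_O_sum (I : Type) (r : seq I) (P : pred I) (F : I -> K) :
  (forall i, P i -> in_O (F i)) -> in_O (\sum_(i <- r | P i) F i).
Proof.
move=> OF; elim/big_rec: _ => [|i x Pi Ox]; first exact: in_O0.
by apply: in_OD => //; apply: OF.
Qed.

Lemma in_O_nth (s : seq K) i : (forall x, x \in s -> in_O x) -> in_O s`_i.
Proof.
move=> Os; have [lt_i_s|le_s_i] := ltnP i (size s); first exact/Os/mem_nth.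
by rewrite nth_default //; apply: in_O0.
Qed.

Lemma in_m0 : in_m 0.
Proof. by rewrite /Defs.in_m /vlt v0. Qed.

Lemma in_m_O x : in_m x -> in_O x.
Proof. by case/andP. Qed.

Lemma vunit_O x : vunit x -> in_O x.
Proof. by rewrite /vunit /Defs.in_O => ->; rewrite /= oag_refl. Qed.

Lemma vunit_notin_m x : vunit x -> ~ in_m x.
Proof. by rewrite /vunit /Defs.in_m /vlt => ->; rewrite eqxx andbF. Qed.

Lemma in_O_notin_m_vunit x : in_O x -> ~ in_m x -> vunit x.
Proof.
rewrite /Defs.in_O /Defs.in_m /vlt /vunit => ->.
by case: (v x) => [g|] //= /negP; rewrite negbK eq_sym => /eqP.
Qed.

Lemma vunit_neq0 x : vunit x -> x != 0.
Proof. by apply: contra_eq_neq => ->; rewrite /vunit v0. Qed.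

Lemma vunitV x : vunit x -> vunit x^-1.
Proof. by rewrite /vunit => /vV; rewrite oppr0. Qed.

Lemma vunitM x y : vunit x -> vunit y -> vunit (x * y).
Proof. by rewrite /vunit vM => -> ->; rewrite /= addr0. Qed.

Lemma vunitX x n : vunit x -> vunit (x ^+ n).
Proof. by rewrite /vunit => /vX ->; rewrite mul0rn. Qed.

Lemma vunitMl x y : in_O x -> in_O y -> vunit (x * y) -> vunit x.
Proof.
rewrite /Defs.in_O /vunit vM; case: (v x) (v y) => [a|] [b|] //= a_ge0 b_ge0 [ab0].
by congr Some; apply: oag_anti a_ge0; have := oag_addl Hle a b_ge0; rewrite addr0 ab0.
Qed.

Lemma notin_O_invm x : ~ in_O x -> in_m x^-1.
Proof.
rewrite /Defs.in_O /Defs.in_m /vlt; case vx: (v x) => [g|] //= g_lt0.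
have g_le0 : le g 0 by case/orP: (oag_total Hle 0 g) => // /g_lt0.
rewrite (vV vx) /=; apply/andP; split; first by rewrite -oppr0 oag_opp.
apply: contra_not_neq g_lt0 => -[/esym/eqP]; rewrite oppr_eq0 => /eqP ->.
exact: oag_refl.
Qed.

Lemma in_mM x y : in_O x -> in_m y -> in_m (x * y).
Proof.
move=> Ox my; have Oy := in_m_O my; apply/andP; split; first exact: in_OM.
apply/eqP => /esym vxy; apply: (@vunit_notin_m y) my.
by apply: (vunitMl Oy Ox); rewrite mulrC.
Qed.

Lemma in_mX x n : (0 < n)%N -> in_m x -> in_m (x ^+ n).
Proof. by case: n => // n _ mx; rewrite exprSr; apply: in_mM (in_OX _ (in_m_O mx)) mx. Qed.

Lemma notin_m1 : ~ in_m 1.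
Proof. exact/vunit_notin_m/v1. Qed.

Lemma in_O_of_expr x n : (0 < n)%N -> in_O (x ^+ n) -> in_O x.
Proof.
move=> n_gt0 Oxn; apply: NNPP => notOx.
have x0 : x != 0 by apply/eqP => x0; apply: notOx; rewrite x0; apply: in_O0.
apply: notin_m1; rewrite -(expr1n _ n) -(mulfV x0) exprMn.
exact: in_mM Oxn (in_mX n_gt0 (notin_O_invm notOx)).
Qed.

Lemma in_m_of_expr x n : (0 < n)%N -> in_m (x ^+ n) -> in_m x.
Proof.
move=> n_gt0 mxn; have Ox := in_O_of_expr n_gt0 (in_m_O mxn).
apply: NNPP => /(in_O_notin_m_vunit Ox) ux.
exact: vunit_notin_m (vunitX n ux) mxn.
Qed.

Lemma in_O_divu a u : in_O a -> vunit u -> in_O (a / u).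
Proof. by move=> Oa /vunitV/vunit_O; apply: in_OM. Qed.

Lemma in_m_div_not_vle x q : q != 0 -> in_m (x / q) -> ~~ vle le (v x) (v q).
Proof.
move=> q0; have [g vq] := v_Some q0; rewrite /Defs.in_m /vlt vM (vV vq) vq.
case: (v x) => [h|] //= /andP[g_lt_h hg]; apply: contra hg => h_le_g.
suff -> : h = g by rewrite subrr.
by apply: oag_anti h_le_g _; have := oag_addr Hle g g_lt_h; rewrite add0r subrK.
Qed.

Lemma vle_in_m a b : vle le (v a) (v b) -> in_m a -> in_m b.
Proof.
rewrite /Defs.in_m /vlt; case: (v a) (v b) => [g|] [h|] //= g_le_h /andP[g_ge0 g0].
rewrite (oag_trans Hle g_ge0 g_le_h); apply: contra g0 => /eqP[h0].
by rewrite -h0 in g_le_h; rewrite (oag_anti Hle g_ge0 g_le_h).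
Qed.

Lemma exists_in_m_neq0 :
  (exists x, x != 0 /\ v x <> Some 0) -> exists2 pi, pi != 0 & in_m pi.
Proof.
case=> x [x0 vx]; have [Ox|/negP/notin_O_invm mxV] := boolP (vle le (Some 0) (v x)).
  by exists x => //; rewrite /Defs.in_m /vlt Ox eq_sym; apply/eqP.
by exists x^-1; rewrite ?invr_eq0.
Qed.

Lemma exists_root_vunit :
  (forall (g : G) (n : nat), (0 < n)%N -> exists h : G, h *+ n = g) ->
  forall a n, a != 0 -> (0 < n)%N -> exists2 c, c != 0 & vunit (c ^+ n / a).
Proof.
move=> Hdiv a n a0 n_gt0; have [g va] := v_Some a0; have [h hn] := Hdiv g n n_gt0.
have [c vc] := v_surj h; have c0 : c != 0 by apply: contra_eq_neq vc => ->; rewrite v0.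
by exists c; rewrite // /vunit vM (vX n vc) (vV va) /= hn subrr.
Qed.

Lemma divisible_between :
  (forall (g : G) (n : nat), (0 < n)%N -> exists h : G, h *+ n = g) ->
  forall a b n, a != 0 -> b != 0 -> (0 < n)%N -> in_m (b / a) ->
  exists x, [/\ x != 0, in_m (x ^+ n / a) & in_m (b / x ^+ n)].
Proof.
move=> Hdiv a b n a0 b0 n_gt0 mba.
have [|x x0 ux] := exists_root_vunit Hdiv (mulf_neq0 a0 b0) (_ : 0 < 2 * n)%N.
  by rewrite muln_gt0.
have xn0 : x ^+ n != 0 by rewrite expf_neq0.
exists x; split => //; apply: (@in_m_of_expr _ 2) => //.
  have -> : (x ^+ n / a) ^+ 2 = x ^+ (2 * n) / (a * b) * (b / a).
    by rewrite mulnC exprM; field; rewrite a0 b0.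
  exact: in_mM (vunit_O ux) mba.
have -> : (b / x ^+ n) ^+ 2 = (x ^+ (2 * n) / (a * b))^-1 * (b / a).
  by rewrite mulnC exprM; field; rewrite a0 b0 xn0.
exact: in_mM (vunit_O (vunitV ux)) mba.
Qed.

Lemma in_O_div_min (s : seq K) : (exists2 e, e \in s & e != 0) ->
  exists l, [/\ l \in s, l != 0 & forall e, e \in s -> in_O (e / l)].
Proof.
elim: s => [[e //]|a s IHs] [e es e0].
have [/hasP[b bs b0]|/hasPn s0] := boolP (has (fun e => e != 0) s); last first.
  have a0 : a != 0.
    by case/predU1P: es e0 => [<- //|/s0]; rewrite negbK => /eqP ->; rewrite eqxx.
  exists a; rewrite inE eqxx; split => // c; rewrite inE => /predU1P[->|/s0].
    by rewrite divff //; apply: in_O1.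
  by rewrite negbK => /eqP ->; rewrite mul0r; apply: in_O0.
have [l [ls l0 Osl]] := IHs (ex_intro2 _ _ b bs b0).
have [Oal|notOal] := boolP (vle le (Some 0) (v (a / l))).
  exists l; rewrite inE ls orbT; split => // c; rewrite inE => /predU1P[->|] //.
  exact: Osl.
have a0 : a != 0 by apply: contraNneq notOal => ->; rewrite mul0r v0.
have Ola : in_O (l / a) by rewrite -invf_div; apply/in_m_O/notin_O_invm/negP.
exists a; rewrite inE eqxx; split => // c; rewrite inE => /predU1P[->|cs].
  by rewrite divff //; apply: in_O1.
have -> : c / a = c / l * (l / a) by rewrite mulrA divfK.
exact: in_OM (Osl _ cs) Ola.
Qed.

Lemma in_O_binform n p a b : (forall i, in_O (p i)) -> in_O a -> in_O b ->
  in_O (binform n p a b).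
Proof.
move=> Op Oa Ob; apply: in_OB; first exact: in_OX.
by apply: in_O_sum => i _; do !apply: in_OM => //; apply: in_OX.
Qed.

Lemma in_O_iterform n p s : (forall i, in_O (p i)) -> (forall e, e \in s -> in_O e) ->
  in_O (iterform n p s).
Proof.
move=> Op; elim: s => [_|a s IHs Oas] /=; first exact: in_O0.
apply: in_O_binform => //; first by apply/in_OX/Oas; rewrite inE eqxx.
by apply: IHs => e es; apply: Oas; rewrite inE es orbT.
Qed.

Lemma in_O_artin_schreier i j : in_O ((artin_schreier K)`_i)`_j.
Proof.
have O_nat (b : bool) : in_O b%:R by apply/in_OMn/in_O1.
rewrite !coefB coefXn coefX coefC !coefMn !coef1.
apply: in_OB; first by apply: in_OB; apply/in_OMn/O_nat.
by case: (i == 0); rewrite ?coefX ?coef0; [apply: O_nat | apply: in_O0].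
Qed.

Section ResidueField.
Variables (k : fieldType) (res : K -> k).
Hypothesis Hres : is_residue_map le v res.

Lemma resD x y : in_O x -> in_O y -> res (x + y) = res x + res y.
Proof. by case: Hres => h _ _ _ _; apply: h. Qed.

Lemma resM x y : in_O x -> in_O y -> res (x * y) = res x * res y.
Proof. by case: Hres => _ h _ _ _; apply: h. Qed.

Lemma res1 : res 1 = 1.
Proof. by case: Hres. Qed.

Lemma res_eq0 x : in_O x -> (res x = 0 <-> in_m x).
Proof. by case: Hres => _ _ _ h _; apply: h. Qed.

Lemma res_surj c : exists2 x, in_O x & res x = c.
Proof. by case: Hres => _ _ _ _ h; apply: h. Qed.

Lemma res0 : res 0 = 0.
Proof. exact/(res_eq0 in_O0)/in_m0. Qed.

Lemma resN x : in_O x -> res (- x) = - res x.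
Proof.
move=> Ox; have ONx := in_ON Ox.
by apply/eqP; rewrite -addr_eq0 -resD // addNr res0.
Qed.

Lemma resB x y : in_O x -> in_O y -> res (x - y) = res x - res y.
Proof. by move=> Ox Oy; rewrite resD ?resN //; apply: in_ON. Qed.

Lemma resX x n : in_O x -> res (x ^+ n) = res x ^+ n.
Proof.
move=> Ox; elim: n => [|n IHn]; first by rewrite !expr0 res1.
by rewrite !exprS resM ?IHn //; apply: in_OX.
Qed.

Lemma res_neq0 x : in_O x -> (res x != 0 <-> vunit x).
Proof.
move=> Ox; split => [/eqP res_x0|ux].
  by apply: (in_O_notin_m_vunit Ox) => /(res_eq0 Ox).
by apply/eqP => /(res_eq0 Ox); apply: vunit_notin_m.
Qed.

Lemma res_divu a u : in_O a -> vunit u -> res (a / u) = res a / res u.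
Proof.
move=> Oa uu; have resu0 : res u != 0 by apply/(res_neq0 (vunit_O uu)).
apply: (mulIf resu0); rewrite divfK // -resM ?divfK ?(vunit_neq0 uu) //.
  exact: in_O_divu.
exact: vunit_O.
Qed.

Lemma res_sum n (F : 'I_n -> K) : (forall i, in_O (F i)) ->
  res (\sum_(i < n) F i) = \sum_(i < n) res (F i).
Proof.
elim: n F => [|n IHn] F OF; first by rewrite !big_ord0 res0.
rewrite !big_ord_recr /= resD ?IHn //; last by apply: in_O_sum.
Qed.

Lemma in_O_horner (p : {poly K}) y :
  (forall i, in_O p`_i) -> in_O y -> in_O p.[y].
Proof.
move=> Op Oy; rewrite horner_coef; apply: in_O_sum => i _.
by apply: in_OM; [apply: Op | apply: in_OX].
Qed.

Lemma res_horner (p : {poly K}) y : (forall i, in_O p`_i) -> in_O y ->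
  res p.[y] = (map_poly res p).[res y].
Proof.
move=> Op Oy; rewrite horner_coef res_sum => [|i]; last first.
  by apply: in_OM; [apply: Op | apply: in_OX].
rewrite (horner_coef_wide _ (size_poly _ _)); apply: eq_bigr => i _.
by rewrite coef_map_id0 ?res0 // resM ?resX //; apply: in_OX.
Qed.

Lemma in_O_eval2 (f : {poly {poly K}}) y z :
  (forall i j, in_O (f`_i)`_j) -> in_O y -> in_O z -> in_O (eval2 f y z).
Proof.
move=> Of Oy Oz; apply: in_O_horner => // i.
by rewrite coef_map_id0 ?horner0 //; apply: in_O_horner.
Qed.

Lemma res_eval2 (f : {poly {poly K}}) y z :
  (forall i j, in_O (f`_i)`_j) -> in_O y -> in_O z ->
  res (eval2 f y z) = eval2 (map_poly (map_poly res) f) (res y) (res z).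
Proof.
move=> Of Oy Oz; rewrite /eval2 res_horner // => [|i]; last first.
  by rewrite coef_map_id0 ?horner0 //; apply: in_O_horner.
congr _.[_]; apply/polyP => i.
by rewrite !coef_map_id0 ?horner0 ?map_poly0 ?res0 // res_horner.
Qed.

Lemma lift_seq (s : seq k) :
  exists2 t : seq K, (forall x, x \in t -> in_O x) & map res t = s.
Proof.
elim: s => [|c s [t Ot ts]]; first by exists [::].
have [x Ox xc] := res_surj c; exists (x :: t); last by rewrite /= xc ts.
by move=> y /predU1P[-> //|/Ot].
Qed.

Lemma res_binform n p a b : (forall i, in_O (p i)) -> in_O a -> in_O b ->
  res (binform n p a b) = binform n (res \o p) (res a) (res b).
Proof.
move=> Op Oa Ob; have Oterm i : in_O (p i * a ^+ i * b ^+ (n - i)).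
  by do !apply: in_OM => //; apply: in_OX.
have Osum : in_O (\sum_(i < n) p i * a ^+ i * b ^+ (n - i)) by apply: in_O_sum.
have Oan := in_OX n Oa.
rewrite /binform resB // (res_sum (fun i : 'I_n => Oterm i)) resX //.
congr (_ - _).
apply: eq_bigr => i _; have Oai := in_OX i Oa; have Obi := in_OX (n - i) Ob.
have Opai := in_OM (Op i) Oai.
by rewrite !resM ?resX.
Qed.

Lemma vunit_binform n p a b : (forall i, in_O (p i)) -> no_root n (res \o p) ->
  in_O a -> in_O b -> vunit a \/ vunit b -> vunit (binform n p a b).
Proof.
move=> Op p_noroot Oa Ob uab; apply/res_neq0; first exact: in_O_binform.
rewrite res_binform //; apply/eqP => /(no_root_binform_eq0 p_noroot)[/eqP resa0 /eqP resb0].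
by case: uab => /res_neq0; [move/(_ Oa) | move/(_ Ob)]; rewrite ?resa0 ?resb0.
Qed.

Lemma vunit_iterform n p s : (forall i, in_O (p i)) -> no_root n (res \o p) ->
  (forall e, e \in s -> in_O e) -> (exists2 e, e \in s & vunit e) ->
  vunit (iterform n p s).
Proof.
move=> Op p_noroot; elim: s => [_ [//]|a s IHs Oas [e es ue]] /=.
have Os e' : e' \in s -> in_O e' by move=> e's; apply: Oas; rewrite inE e's orbT.
have Oa : in_O a by apply: Oas; rewrite inE eqxx.
apply: vunit_binform => //; [exact: in_OX | exact: in_O_iterform |].
case/predU1P: es ue => [-> ua|es ue]; first by left; apply: vunitX.
by right; apply: IHs => //; exists e.
Qed.

Lemma iterform_bound n p x s : (forall i, in_O (p i)) -> no_root n (res \o p) ->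
  x != 0 -> (forall e, e \in x :: s -> in_O e) ->
  iterform n p (x :: s) != 0 /\ in_O (x ^+ (n ^ size (x :: s)) / iterform n p (x :: s)).
Proof.
(* Dividing by an entry l of least value leaves a list containing 1. *)
move=> Op p_noroot x0 Oxs.
have [|l [ls l0 Ol]] := in_O_div_min (s := x :: s); first by exists x; rewrite ?inE ?eqxx.
set t := map (fun e => e / l) (x :: s).
have xs_t : x :: s = map ( *%R l) t.
  by rewrite -map_comp -[LHS]map_id; apply: eq_map => e /=; rewrite mulrC divfK.
have ut : vunit (iterform n p t).
  apply: vunit_iterform => // [_ /mapP[e es ->]|]; first exact: Ol.
  by exists 1; [apply/mapP; exists l; rewrite ?divff | apply: v1].
rewrite xs_t iterform_scale size_map -xs_t mulf_neq0 ?expf_neq0 ?(vunit_neq0 ut) //.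
split=> //; rewrite invfM mulrA -expr_div_n; apply: in_O_divu => //.
by apply/in_OX/Ol; rewrite inE eqxx.
Qed.

Section ExtremalContradiction.
Hypothesis Hext : extremal le v.
Hypothesis Hdiv : forall (g : G) (n : nat), (0 < n)%N -> exists h : G, h *+ n = g.
Variables (n : nat) (p : nat -> K) (pi : K) (g : {poly {poly K}}) (C : seq K).
Hypotheses (n_gt0 : (0 < n)%N) (Op : forall i, in_O (p i)).
Hypothesis p_noroot : no_root n (res \o p).
Hypotheses (pi_neq0 : pi != 0) (m_pi : in_m pi) (Og : forall i j, in_O (g`_i)`_j).
Hypothesis g_root : forall eps, in_m eps -> exists2 z, in_O z & eval2 g eps z = 0.
Hypothesis OC : forall c, c \in C -> in_O c.
Hypothesis C_unit : forall u, vunit u ->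
  exists2 c, c \in C & forall z, in_O z -> vunit (eval2 g (c / u) z).

Let N := (\max_(i < size g) size (g`_i)%R)%N.
Let r := size C.
Let M := (n * N).+1.
Let D := (n ^ r.+1)%N.

Let size_g_le i : (size (g`_i)%R <= N)%N.
Proof.
have [lt_i_g|le_g_i] := ltnP i (size g); last by rewrite nth_default ?size_poly0.
exact: (@leq_bigmax _ (fun i : 'I_(size g) => size (g`_i)%R) (Ordinal lt_i_g)).
Qed.

(* The polynomial Q of the proof sketch; the homog_eval2 entries are the F_j. *)
Let Q x zs := iterform n p (x ^+ M ::
  [seq homog_eval2 g N (C`_j * pi ^+ n) (binform n p x pi) zs`_j | j <- iota 0 r]).

Let tail l u zs :=
  [seq u ^+ N * eval2 g (C`_j * (pi / l) ^+ n / u) zs`_j | j <- iota 0 r].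

Let Q_factor l u x zs : l != 0 -> u != 0 -> binform n p x pi = l ^+ n * u ->
  Q x zs = l ^+ (n * N * D) * iterform n p (x ^+ M / l ^+ (n * N) :: tail l u zs).
Proof.
move=> l0 u0 xpi; rewrite /Q.
suff -> : x ^+ M :: [seq homog_eval2 g N (C`_j * pi ^+ n) (binform n p x pi) zs`_j
                      | j <- iota 0 r] =
          map ( *%R (l ^+ (n * N))) (x ^+ M / l ^+ (n * N) :: tail l u zs).
  by rewrite iterform_scale /= size_map size_iota -exprM.
rewrite /= [_ * (x ^+ M / _)]mulrC divfK ?expf_neq0 //; congr (_ :: _).
rewrite /tail -map_comp; apply: eq_map => j /=.
rewrite homog_eval2E // ?xpi ?mulf_neq0 ?expf_neq0 // exprMn -exprM mulrA.
by congr (_ * eval2 _ _ _); rewrite expr_div_n; field; rewrite u0 expf_neq0.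
Qed.

Let O_tail l u zs : in_O (pi / l) -> vunit u -> (forall j, in_O zs`_j) ->
  forall e, e \in tail l u zs -> in_O e.
Proof.
move=> Ot uu Ozs _ /mapP[j _ ->]; apply: in_OM; first exact/vunit_O/vunitX.
apply: in_O_eval2 => //; apply: in_O_divu => //.
by apply: in_OM; [apply: in_O_nth | apply: in_OX].
Qed.

Let binform_near x : in_O (x / pi) ->
  binform n p x pi = pi ^+ n * binform n p (x / pi) 1 /\ vunit (binform n p (x / pi) 1).
Proof.
move=> Ow; split; first by rewrite -binform_scale mulr1 mulrC divfK.
by apply: vunit_binform => //; [apply: in_O1 | right; apply: v1].
Qed.

Let binform_far x : x != 0 -> in_m (pi / x) ->
  binform n p x pi = x ^+ n * binform n p 1 (pi / x) /\ vunit (binform n p 1 (pi / x)).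
Proof.
move=> x0 mt; split; first by rewrite -binform_scale mulr1 mulrC divfK.
by apply: vunit_binform => //; [apply: in_O1 | apply: in_m_O | left; apply: v1].
Qed.

Let Q_bound_near x zs : in_O (x / pi) -> (forall j, in_O zs`_j) ->
  [/\ Q x zs != 0, in_O (Q x zs) & in_m (pi ^+ (M * D) / Q x zs)].
Proof.
move=> Ow Ozs; have [xpi uu] := binform_near Ow; set u := binform n p _ 1 in xpi uu.
have Opipi : in_O (pi / pi) by rewrite divff //; apply: in_O1.
rewrite (Q_factor _ _ _ xpi) ?expf_neq0 ?(vunit_neq0 uu) //.
have -> : x ^+ M / pi ^+ (n * N) = pi * (x / pi) ^+ M.
  by rewrite expr_div_n [pi ^+ M]exprS; field; rewrite ?pi_neq0 ?expf_neq0.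
set U := iterform _ _ _; have uU : vunit U.
  apply: vunit_iterform => // [e|].
    by case/predU1P => [->|]; [apply: in_OM (in_m_O m_pi) (in_OX _ Ow) | apply: O_tail].
  have [c Cc uc] := C_unit uu.
  exists (u ^+ N * eval2 g (C`_(index c C) * (pi / pi) ^+ n / u) zs`_(index c C)).
    by rewrite inE; apply/orP; right; apply: map_f; rewrite mem_iota index_mem.
  by rewrite nth_index // divff // expr1n mulr1; apply: vunitM; [apply: vunitX | apply: uc].
split; first by rewrite mulf_neq0 ?expf_neq0 ?(vunit_neq0 uU).
  by apply: in_OM; [apply/in_OX/in_m_O | apply: vunit_O].
have -> : pi ^+ (M * D) / (pi ^+ (n * N * D) * U) = U^-1 * pi ^+ D.
  by rewrite mulSn exprD; field; rewrite ?expf_neq0 ?(vunit_neq0 uU).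
by apply: in_mM; [apply/vunit_O/vunitV | apply: in_mX; rewrite ?expn_gt0 ?n_gt0].
Qed.

Let Q_bound_far x zs : in_O x -> ~ in_O (x / pi) -> (forall j, in_O zs`_j) ->
  [/\ Q x zs != 0, in_O (Q x zs) & in_m (pi ^+ (M * D) / Q x zs)].
Proof.
move=> Ox notOw Ozs.
have x0 : x != 0 by apply: contra_not_neq notOw => ->; rewrite mul0r; apply: in_O0.
have mt : in_m (pi / x) by rewrite -invf_div; apply: notin_O_invm.
have [xpi uu] := binform_far x0 mt; set u := binform n p 1 _ in xpi uu.
rewrite (Q_factor _ _ _ xpi) ?expf_neq0 ?(vunit_neq0 uu) //.
have -> : x ^+ M / x ^+ (n * N) = x by rewrite exprS mulfK ?expf_neq0.
have Oxtail e : e \in x :: tail x u zs -> in_O e.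
  by move=> /predU1P[-> //|etail]; apply: O_tail (in_m_O mt) uu Ozs _ etail.
have [I0] := iterform_bound Op p_noroot x0 Oxtail; set I := iterform _ _ _.
rewrite /= size_map size_iota -/D => OxI.
split; first by rewrite mulf_neq0 ?expf_neq0.
  by apply: in_OM; [apply: in_OX | apply: in_O_iterform].
have -> : pi ^+ (M * D) / (x ^+ (n * N * D) * I) = (x ^+ D / I) * (pi / x) ^+ (M * D).
  by rewrite expr_div_n mulSn !exprD; field; rewrite ?x0 ?I0 ?expf_neq0.
by apply: in_mM OxI _; apply: in_mX; rewrite // muln_gt0 expn_gt0 n_gt0.
Qed.

Let Q_bound x zs : in_O x -> (forall j, in_O zs`_j) ->
  [/\ Q x zs != 0, in_O (Q x zs) & in_m (pi ^+ (M * D) / Q x zs)].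
Proof.
move=> Ox Ozs; have [Ow|/negP notOw] := boolP (vle le (Some 0) (v (x / pi))).
  exact: Q_bound_near.
exact: Q_bound_far.
Qed.

Let Q_term := iterform_term n p (GRing.Exp 'X_0 M ::
  [seq homog_eval2_term g N (GRing.Const (C`_j * pi ^+ n))
         (binform_term n p 'X_0 (GRing.Const pi)) 'X_j.+1 | j <- iota 0 r]).

Let eval_Q_term x zs : GRing.eval (x :: zs) Q_term = Q x zs.
Proof.
rewrite eval_iterform_term /= -map_comp; congr (iterform _ _ (_ :: _)).
by apply: eq_map => j /=; rewrite eval_homog_eval2_term eval_binform_term.
Qed.

Let inv_free_Q_term : inv_free Q_term.
Proof.
rewrite inv_free_iterform_term //= all_map; apply/allP => j _ /=.
by rewrite inv_free_homog_eval2_term ?inv_free_binform_term.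
Qed.

Let exists_Q_max : exists x zs, [/\ in_O x, forall j, in_O zs`_j &
  forall y ys, size ys = r -> in_O y -> (forall j, in_O ys`_j) ->
    vle le (v (Q y ys)) (v (Q x zs))].
Proof.
have [a [a_size Oa a_max]] := Hext r.+1 inv_free_Q_term.
case: a a_size Oa a_max => // x zs _ Oxzs xzs_max; exists x, zs; split.
- by apply: Oxzs; rewrite inE eqxx.
- by move=> j; apply: in_O_nth => y yzs; apply: Oxzs; rewrite inE yzs orbT.
move=> y ys ys_size Oy Oys; rewrite -!eval_Q_term; apply: xzs_max => /=; first by rewrite ys_size.
by move=> z /predU1P[-> //|zys]; rewrite -(nth_index 0 zys); apply: Oys.
Qed.

Lemma extremal_contradiction : False.
Proof.
have [xm [zsm [Oxm Ozsm Q_max]]] := exists_Q_max.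
have [q0 Oq mq] := Q_bound Oxm Ozsm; set q := Q xm zsm in q0 Oq mq Q_max.
have MD_gt0 : (0 < M * D)%N by rewrite muln_gt0 expn_gt0 n_gt0.
have [x [x0 mxq mpix]] := divisible_between Hdiv q0 (expf_neq0 _ pi_neq0) MD_gt0 mq.
have Ox : in_O x.
  apply: (in_O_of_expr MD_gt0); rewrite -(divfK q0 (x ^+ _)).
  exact: in_OM (in_m_O mxq) Oq.
have mt : in_m (pi / x) by apply: (in_m_of_expr MD_gt0); rewrite expr_div_n.
have [xpi uu] := binform_far x0 mt; set u := binform n p 1 _ in xpi uu.
have meps j : in_m (C`_j * pi ^+ n / binform n p x pi).
  have -> : C`_j * pi ^+ n / binform n p x pi = u^-1 * (C`_j * (pi / x) ^+ n).
    by rewrite xpi expr_div_n; field; rewrite ?x0 ?expf_neq0 ?(vunit_neq0 uu).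
  apply: in_mM; first exact/vunit_O/vunitV.
  by apply: in_mM; [exact: in_O_nth | exact: in_mX].
have [j _|zs zs_size zs_root] := @seq_choice _ 0
    (fun j z => in_O z /\ eval2 g (C`_j * pi ^+ n / binform n p x pi) z = 0) r.
  by have [z Oz gz] := g_root (meps j); exists z.
have Ozs j : in_O zs`_j.
  by have [/zs_root[]|le_r_j] := ltnP j r; last by rewrite nth_default ?zs_size //; apply: in_O0.
have Qx : Q x zs = x ^+ (M * D).
  rewrite /Q exprM -(iterform_cons_nseq0 p _ _ n_gt0); congr (iterform _ _ (_ :: _)).
  rewrite -[in nseq r 0](size_iota 0 r) -(size_map (fun j => homog_eval2 g N
    (C`_j * pi ^+ n) (binform n p x pi) zs`_j)); apply/all_pred1P/allP => e /mapP[j].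
  rewrite mem_iota add0n => /andP[_ /zs_root[_ gz]] ->.
  by rewrite /= homog_eval2E ?gz ?mulr0 // xpi mulf_neq0 ?expf_neq0 ?(vunit_neq0 uu).
have := Q_max x zs zs_size Ox Ozs; rewrite Qx; apply/negP.
exact: in_m_div_not_vle.
Qed.

End ExtremalContradiction.

Lemma artin_schreier_slope_unit z eps : in_O z -> in_m eps ->
  in_m (z ^+ 2 - z - eps) -> vunit (1 - (z + z)).
Proof.
move=> Oz meps me; have Oeps := in_m_O meps; have Oz2 := in_OX 2 Oz.
have Oz2z := in_OB Oz2 Oz; have Ozz := in_OD Oz Oz.
apply/res_neq0; first exact: in_OB in_O1 Ozz.
have /eqP : res z * (res z - 1) = 0.
  have /(res_eq0 (in_OB Oz2z Oeps)) := me.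
  by rewrite !resB // resX // (proj2 (res_eq0 Oeps) meps) subr0 mulrBr mulr1 -expr2.
have O1 : in_O 1 := in_O1.
rewrite resB // resD // res1 mulf_eq0 subr_eq0 => /orP[]/eqP ->.
  by rewrite addr0 subr0 oner_neq0.
by rewrite opprD addrA subrr sub0r oppr_eq0 oner_neq0.
Qed.

Lemma extremal_artin_schreier_root : extremal le v ->
  forall eps, in_m eps -> exists2 z, in_O z & z ^+ 2 - z - eps = 0.
Proof.
move=> Hext eps meps; have Oeps := in_m_O meps.
pose T := ('X_0 ^+ 2 - 'X_0 - eps%:T)%T.
have [a [a_size Oa a_max]] := Hext 1%N T isT.
case: a a_size Oa a_max => [|z0 []] // _ Oa a_max.
have Oz0 : in_O z0 by apply: Oa; rewrite inE eqxx.
have z0_max z : in_O z -> vle le (v (z ^+ 2 - z - eps)) (v (z0 ^+ 2 - z0 - eps)).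
  by move=> Oz; apply: (a_max [:: z]) => // y /predU1P[->|].
have me0 : in_m (z0 ^+ 2 - z0 - eps).
  apply: vle_in_m (z0_max 0 in_O0) _.
  by rewrite expr0n subr0 sub0r -mulN1r; apply: in_mM (in_ON in_O1) meps.
have [e0|e0] := eqVneq (z0 ^+ 2 - z0 - eps) 0; first by exists z0.
have ud := artin_schreier_slope_unit Oz0 meps me0.
set e := z0 ^+ 2 - z0 - eps in me0 e0 ud; set d := e / (1 - (z0 + z0)).
have Od : in_O d by apply: in_O_divu (in_m_O me0) ud.
have z1_root : (z0 + d) ^+ 2 - (z0 + d) - eps = d ^+ 2.
  by rewrite /d /e; field; rewrite (vunit_neq0 ud).
have : ~~ vle le (v (d ^+ 2)) (v e).
  apply: in_m_div_not_vle => //.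
  have -> : d ^+ 2 / e = (1 - (z0 + z0)) ^- 2 * e.
    by rewrite /d; field; rewrite e0 (vunit_neq0 ud).
  exact: in_mM (vunit_O (vunitV (vunitX 2 ud))) me0.
by rewrite -z1_root z0_max //; apply: in_OD.
Qed.

Lemma unit_constants_of_many_residues (f : {poly {poly K}}) (s t : seq k) :
  (forall i j, in_O (f`_i)`_j) ->
  (forall alpha, alpha \notin s -> forall z, eval2 (map_poly (map_poly res) f) alpha z != 0) ->
  uniq t -> (size s < size t)%N ->
  exists2 C : seq K, (forall c, c \in C -> in_O c) &
    forall u, vunit u -> exists2 c, c \in C & forall z, in_O z -> vunit (eval2 f (c / u) z).
Proof.
move=> Of f_noroot t_uniq lt_s_t; have [C OC Ct] := lift_seq t; exists C => // u uu.
have resu0 : res u != 0 by apply/res_neq0 => //; apply: vunit_O.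
have /hasP[a /mapP[c' c't ->] cu_s] : has [predC s] [seq c / res u | c <- t].
  apply: contraLR lt_s_t => /hasPn sub; rewrite -leqNgt -(size_map (fun c => c / res u)).
  apply: uniq_leq_size => [|x /sub]; last by rewrite inE negbK.
  by rewrite map_inj_uniq // => x y; apply: (mulIf (invr_neq0 resu0)).
move: c't cu_s; rewrite -Ct => /mapP[c cC ->] cu_s.
exists c => // z Oz; have Ocu := in_O_divu (OC c cC) uu.
apply/res_neq0; first exact: in_O_eval2.
have cu_s' : res c / res u \notin s by move: cu_s; rewrite inE.
have Oc := OC c cC; rewrite res_eval2 // res_divu //; exact: f_noroot _ cu_s' _.
Qed.

Lemma unit_constants_of_finite_residue (s : seq k) : (forall x, x \in s) ->
  exists2 C : seq K, (forall c, c \in C -> in_O c) &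
    forall u, vunit u -> exists2 c, c \in C &
      forall z, in_O z -> vunit (eval2 (artin_schreier K) (c / u) z).
Proof.
move=> s_full; have [C OC Cs] := lift_seq s; exists C => // u uu.
have resu0 : res u != 0 by apply/res_neq0 => //; apply: vunit_O.
have [beta beta_notAS] := artin_schreier_not_surj s_full.
have /mapP[c cC beta_u] : beta * res u \in map res C by rewrite Cs.
exists c => // z Oz; have Ocu := in_O_divu (OC c cC) uu.
have Oz2 := in_OX 2 Oz; have Oz2z := in_OB Oz2 Oz.
rewrite eval2_artin_schreier; apply/res_neq0; first exact: in_OB.
have Oc := OC c cC.
by rewrite !resB // resX // res_divu // -beta_u mulfK // subr_eq0.
Qed.

Lemma lift_no_root : ~ GRing.closed_field_axiom k ->
  exists n p, [/\ (0 < n)%N, forall i, in_O (p i) & no_root n (res \o p)].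
Proof.
move=> not_closed.
have [n [P [n_gt0 P_noroot]]] : exists n (P : nat -> k), (0 < n)%N /\ no_root n P.
  apply: NNPP => no; apply: not_closed => n P n_gt0; apply: NNPP => noroot.
  by apply: no; exists n, P; split => // x; apply/eqP => Px; apply: noroot; exists x.
have [t Ot tP] := lift_seq [seq P i | i <- iota 0 n].
have size_t : size t = n by rewrite -(size_map res) tP size_map size_iota.
exists n, (nth 0 t); split => // [i|x]; first exact: in_O_nth.
rewrite (eq_bigr (fun i : 'I_n => P i * x ^+ i)) // => i _.
by rewrite /= -(nth_map 0 0) ?size_t // tP (nth_map 0) ?size_iota // nth_iota.
Qed.

End ResidueField.

End ValuedField.

Unset Implicit Arguments.

Theorem proposition3p7 (K : fieldType) (G : zmodType) (le : rel G)
  (v : K -> option G) (k : fieldType) (res : K -> k) :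
  is_valuation le v ->
  extremal le v ->
  (exists x : K, x != 0 /\ v x <> Some 0) ->
  (forall (g : G) (n : nat), (0 < n)%N -> exists h : G, h *+ n = g) ->
  is_residue_map le v res ->
  ~ GRing.closed_field_axiom k ->
  ~ exists f : {poly {poly K}},
      [/\ (forall i j, in_O le v (f`_i)`_j),
          (exists s : seq k, forall alpha : k, alpha \notin s ->
             forall z : k,
               (map_poly (fun p : {poly k} => p.[alpha])
                  (map_poly (map_poly res) f)).[z] != 0) &
          (forall eps : K, in_m le v eps ->
             exists2 z : K, in_O le v z &
               (map_poly (fun p : {poly K} => p.[eps]) f).[z] = 0)].
Proof.
move=> Hv Hext Hnt Hdiv Hres not_closed [f [Of [s f_noroot] f_root]].
have [n [p [n_gt0 Op p_noroot]]] := lift_no_root Hv Hres not_closed.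
have [pi pi_neq0 m_pi] := exists_in_m_neq0 Hv Hnt.
have [[t t_uniq t_size]|[s' s'_full]] := uniq_seq_or_finite k (size s).+1.
  have [|C OC C_unit] := unit_constants_of_many_residues Hv Hres Of f_noroot t_uniq.
    by rewrite t_size.
  exact: (extremal_contradiction Hv Hres Hext Hdiv n_gt0 Op p_noroot pi_neq0 m_pi
    Of f_root OC C_unit).
have [C OC C_unit] := unit_constants_of_finite_residue Hv Hres s'_full.
apply: (extremal_contradiction Hv Hres Hext Hdiv n_gt0 Op p_noroot pi_neq0 m_pi
  (in_O_artin_schreier Hv) _ OC C_unit).
move=> eps /(extremal_artin_schreier_root Hv Hres Hext)[z Oz z_root].
by exists z; rewrite ?eval2_artin_schreier.
Qed.
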